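(* Let $\mathcal G$ be a class of topological groups. A paratopological group whose underlying topological space is a $k_\omega$-space is $\mathcal G$-separated if and only if it is $\mathcal G$-regular.
   Context: All topological spaces are Hausdorff. A paratopological group is a group with a Hausdorff topology making multiplication $G\times G\to G$ continuous (inversion need not be continuous); a topological group is one in which inversion is also continuous. A topological space $X$ is a $k_\omega$-space if there is a countable cover $\mathcal K$ of $X$ by compact subsets such that a set $U\subset X$ is open if and only if $U\cap K$ is open in $K$ for every $K\in\mathcal K$. A continuous map $h:X\to Y$ is regular if for each $x\in X$ and each neighborhood $U$ of $x$ there is a closed set $F\subset Y$ such that $h^{-1}(F)$ is a closed neighborhood of $x$ with $h^{-1}(F)\subset U$. For a class $\mathcal G$ of topological groups, a paratopological group $G$ is $\mathcal G$-separated if there is a continuous bijective homomorphism $h:G\to H$ onto a topological group $H\in\mathcal G$, and $\mathcal G$-regular if there is a regular continuous homomorphism $h:G\to H$ onto a topological group $H\in\mathcal G$. *)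

From mathcomp Require Import all_boot all_order.
From mathcomp Require Import all_classical all_reals all_analysis.
Set Implicit Arguments. Unset Strict Implicit. Unset Printing Implicit Defensive.
Local Open Scope classical_set_scope.

Record group_on (T : Type) := GroupOn {
  gmul : T -> T -> T;
  gone : T;
  ginv : T -> T;
  gmulA : forall x y z, gmul x (gmul y z) = gmul (gmul x y) z;
  gmul1 : forall x, gmul gone x = x;
  gmulV : forall x, gmul (ginv x) x = gone
}.

Record ParaTopGroup := ParaTopGroupPack {
  ptg_sort : topologicalType;
  ptg_grp : group_on ptg_sort;
  ptg_hausdorff : hausdorff_space ptg_sort;
  ptg_mul_cont : continuous (fun p : ptg_sort * ptg_sort => gmul ptg_grp p.1 p.2)
}.

Record TopGroup := TopGroupPack {
  tg_sort : topologicalType;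
  tg_grp : group_on tg_sort;
  tg_hausdorff : hausdorff_space tg_sort;
  tg_mul_cont : continuous (fun p : tg_sort * tg_sort => gmul tg_grp p.1 p.2);
  tg_inv_cont : continuous (ginv tg_grp)
}.

Definition TopGroupClass := TopGroup -> Prop.

(* Countable covers are indexed by nat (a nonempty finite cover can be repeated). *)
Definition k_omega_space (X : topologicalType) : Prop :=
  exists K : nat -> set X,
    (forall n, compact (K n)) /\
    (\bigcup_n K n = [set: X]) /\
    (forall U : set X,
        open U <-> (forall n, exists V : set X, open V /\ U `&` K n = V `&` K n)).

Definition regular_map (X Y : topologicalType) (h : X -> Y) : Prop :=
  continuous h /\
  forall (x : X) (U : set X), nbhs x U ->
    exists F : set Y, closed F /\ closed (h @^-1` F) /\ nbhs x (h @^-1` F)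
                      /\ h @^-1` F `<=` U.

Definition is_hom (G : ParaTopGroup) (H : TopGroup) (h : ptg_sort G -> tg_sort H) :=
  forall x y, h (gmul (ptg_grp G) x y) = gmul (tg_grp H) (h x) (h y).

Definition separated_by (C : TopGroupClass) (G : ParaTopGroup) : Prop :=
  exists H : TopGroup, C H /\
    exists h : ptg_sort G -> tg_sort H,
      is_hom h /\ continuous h /\ bijective h.

Definition regular_by (C : TopGroupClass) (G : ParaTopGroup) : Prop :=
  exists H : TopGroup, C H /\
    exists h : ptg_sort G -> tg_sort H,
      is_hom h /\ regular_map h /\ (forall y, exists x, h x = y).

From mathcomp Require Import all_boot all_order.
From mathcomp Require Import all_classical all_reals all_analysis.
Set Implicit Arguments. Unset Strict Implicit. Unset Printing Implicit Defensive.
Local Open Scope classical_set_scope.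

(* A continuous injection h of a k_omega-space X into a regular Hausdorff space
   Y (such as a topological group) is a regular map.  Given a neighbourhood U
   of x, exhaust X by increasing compacta L_n containing x and build open sets
   A_n, B_n of Y with closure A_n <= B_n, B_n decreasing, h x in A_0,
   h (L_n /\ h^-1 (closure A_n)) <= A_(n+1) and L_n /\ h^-1 (closure B_n) <= U.
   Each step separates a compact set from the compact, hence closed, set
   h (L_(n+1) \ U), which it avoids by injectivity.  Then the intersection F of
   the closures of the B_n is closed, h^-1 F <= U, and h^-1 F contains the union
   of the L_n /\ h^-1 A_n, which is open because the compacta determine the
   topology of X.  Conversely, a regular map out of a Hausdorff space is
   injective. *)

Section GroupTheory.
Variables (T : Type) (G : group_on T).
Local Notation mul := (gmul G).
Local Notation inv := (ginv G).

Lemma gmulI x : injective (mul x).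
Proof. by move=> y z e; rewrite -(gmul1 G y) -(gmul1 G z) -(gmulV G x) -!gmulA e. Qed.

Lemma gmulVr x : mul x (inv x) = gone G.
Proof.
rewrite -[LHS](gmul1 G) -(gmulV G (inv x)) -gmulA [mul (inv x) _]gmulA gmulV gmul1.
by rewrite gmulV.
Qed.

Lemma gmul1r x : mul x (gone G) = x.
Proof. by rewrite -(gmulV G x) gmulA gmulVr gmul1. Qed.

Lemma ginvK : involutive inv.
Proof. by move=> x; apply: (@gmulI (inv x)); rewrite gmulVr gmulV. Qed.

Lemma ginvM x y : inv (mul x y) = mul (inv y) (inv x).
Proof.
apply: (@gmulI (mul x y)); rewrite gmulVr -gmulA [mul y _]gmulA gmulVr gmul1.
by rewrite gmulVr.
Qed.
End GroupTheory.

Section TopGroupTheory.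
Variable H : TopGroup.
Local Notation mul := (gmul (tg_grp H)).
Local Notation inv := (ginv (tg_grp H)).

Lemma tg_mul_cvg {T : Type} (F : set_system T) {FF : Filter F}
    (f g : T -> tg_sort H) (a b : tg_sort H) :
  f @ F --> a -> g @ F --> b -> (fun t => mul (f t) (g t)) @ F --> mul a b.
Proof. exact: continuous2_cvg (@tg_mul_cont H (a, b)). Qed.

Lemma tg_regular : regular_space (tg_sort H).
Proof.
move=> y O /= nO.
have yE : mul y (mul (inv y) y) = y by rewrite gmulV gmul1r.
(* [(a, b) |-> a b^-1 y] maps [(y, y)] to [y], so [A B^-1 y] lies in [O]
   for suitable neighbourhoods [A], [B] of [y]. *)
have : (fun p : tg_sort H * tg_sort H => mul p.1 (mul (inv p.2) y))
         @ nbhs (y, y) --> y.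
  rewrite -[X in _ --> X]yE; apply: tg_mul_cvg; first exact: cvg_fst.
  apply: tg_mul_cvg; last exact: cvg_cst.
  apply: (cvg_comp _ _ cvg_snd); exact: tg_inv_cont.
move=> /(_ O nO) [[A B] /= [nA nB] ABO].
exists (A `&` B); first exact: filterI.
move=> z clz.
have zE : mul y (mul (inv z) z) = y by rewrite gmulV gmul1r.
have : (fun w => mul y (mul (inv z) w)) @ nbhs z --> y.
  rewrite -[X in _ --> X]zE; apply: tg_mul_cvg; first exact: cvg_cst.
  by apply: tg_mul_cvg; [exact: cvg_cst | exact: cvg_id].
move=> /(_ _ (filterI nA nB)) /clz [w [[Aw _] [_ Bv]]].
have <- : mul w (mul (inv (mul y (mul (inv z) w))) y) = z.
  by rewrite !ginvM ginvK !gmulA gmulVr gmul1 -gmulA gmulV gmul1r.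
by apply: (ABO (w, _)); split.
Qed.
End TopGroupTheory.

Lemma regular_compact_closure_sub (Y : topologicalType) (K O : set Y) :
  regular_space Y -> compact K -> open O -> K `<=` O ->
  exists P, [/\ open P, K `<=` P & closure P `<=` O].
Proof.
move=> Yreg cK oO KO.
pose good := [set P : set Y | open P /\ closure P `<=` O].
apply: contrapT => noP.
(* Otherwise the traces [K `\` P] of the good sets form a proper filter base on [K]. *)
have KP0 P : good P -> K `\` P !=set0.
  move=> [oP clPO]; apply: contrapT => /set0P/negP; rewrite negbK => /eqP KP.
  apply: noP; exists P; split => // k Kk; apply: contrapT => Pk.
  by have : (K `\` P) k by []; rewrite KP.
have good0 : good set0 by split; [exact: open0 | rewrite closure0].
pose F := filter_from good (fun P => K `\` P).
have FF : ProperFilter F.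
  apply: filter_from_proper => //; apply: filter_from_filter; first by exists set0.
  move=> P Q [oP clPO] [oQ clQO]; exists (P `|` Q).
    by split; [exact: openU | rewrite closureU => x [/clPO|/clQO]].
  by move=> x [Kx PQx]; split; split => // ?; apply: PQx; [left | right].
have FK : F K by exists set0 => // y [].
have [x [Kx clx]] := cK _ FF FK.
have [P nP clPO] := Yreg x O (open_nbhs_nbhs (conj oO (KO x Kx))).
have goodP : good P°.
  split; first exact: open_interior.
  exact: subset_trans (closureS (@interior_subset _ P)) clPO.
have FP : F (K `\` P°) by exists P°.
by have [w [[_ nPw] Pw]] := clx _ _ FP (nbhs_interior nP).
Qed.

Lemma nat_dependent_choice (T : Type) (P : nat -> T -> Prop)
    (R : nat -> T -> T -> Prop) (t0 : T) :
  P 0%N t0 -> (forall n t, P n t -> exists2 t', P n.+1 t' & R n t t') ->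
  exists s : nat -> T, s 0%N = t0 /\ forall n, P n (s n) /\ R n (s n) (s n.+1).
Proof.
move=> P0 next.
have step (nt : nat * T) : exists t',
    P nt.1 nt.2 -> P nt.1.+1 t' /\ R nt.1 nt.2 t'.
  have [/next [t' Pt' Rt']|nP] := pselect (P nt.1 nt.2); first by exists t'.
  by exists nt.2 => /nP.
have [f Pf] := choice step.
pose fix s n := if n is k.+1 then f (k, s k) else t0.
exists s; split => //.
suff Ps n : P n (s n) by move=> n; split => //; exact: (Pf (n, s n) (Ps n)).2.
by elim: n => //= n /(Pf (n, s n)) [].
Qed.

Lemma k_omega_open_bigcup (X : topologicalType) (K L V : nat -> set X) :
  (forall U : set X,
     (forall n, exists W : set X, open W /\ U `&` K n = W `&` K n) -> open U) ->
  nondecreasing_seq L -> (forall n, K n `<=` L n) -> (forall n, open (V n)) ->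
  nondecreasing_seq (fun n => L n `&` V n) ->
  open (\bigcup_n (L n `&` V n)).
Proof.
move=> topK Lnd KL oV LVnd; apply: topK => m.
exists (\bigcup_(n in [set n | (m <= n)%N]) V n).
split; first by apply: bigcup_open => n _; exact: oV.
apply/seteqP; split => g [LVg Kg]; split => //.
  case: LVg => n _ LVng.
  have /subsetPset/(_ g LVng) [_ Vg] := LVnd n (maxn n m) (leq_maxl n m).
  by exists (maxn n m) => //; exact: leq_maxr.
case: LVg => n mn Vg; exists n => //; split => //.
by move/subsetPset: (Lnd m n mn); apply; exact: KL.
Qed.

Section KOmegaRegularMap.
Context {X Y : topologicalType} (h : X -> Y).
Hypotheses (Yhaus : hausdorff_space Y) (Yreg : regular_space Y).
Hypotheses (hc : continuous h) (hinj : injective h).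

Section Layers.
Variables (L : nat -> set X) (U : set X).
Hypotheses (cL : forall n, compact (L n)) (oU : open U).

Definition layer n (p : set Y * set Y) :=
  [/\ open p.1, open p.2, closure p.1 `<=` p.2 & L n `&` h @^-1` closure p.2 `<=` U].

Lemma layer_around n (C O : set Y) :
  compact C -> open O -> C `<=` O -> L n `&` h @^-1` C `<=` U ->
  exists p, [/\ layer n p, C `<=` p.1 & p.2 `<=` O].
Proof.
move=> cC oO CO LCU.
pose O' := O `&` ~` (h @` (L n `\` U)).
have oO' : open O'.
  apply: openI => //; apply: closed_openC; apply: compact_closed => //.
  apply: continuous_compact; first exact: continuous_subspaceT.
  by apply: compact_closedI => //; exact: open_closedC.
have CO' : C `<=` O'.
  move=> y Cy; split; first exact: CO.
  by move=> [g [Lg nUg] gy]; apply/nUg/LCU; split => //; rewrite /preimage /= gy.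
have [B [oB CB clBO']] := regular_compact_closure_sub Yreg cC oO' CO'.
have [A [oA CA clAB]] := regular_compact_closure_sub Yreg cC oB CB.
exists (A, B); split => //=; last by move=> y /subset_closure /clBO' [].
split => // g [Lg /clBO' [_ nbad]]; apply: contrapT => nUg; apply: nbad; by exists g.
Qed.

Lemma layer_next n p : layer n p -> exists2 p', layer n.+1 p' &
  L n `&` h @^-1` closure p.1 `<=` h @^-1` p'.1 /\ p'.2 `<=` p.2.
Proof.
move=> [oA oB clAB LBU].
have cD : compact (L n `&` h @^-1` closure p.1).
  apply: compact_closedI => //; apply: preimage_closed; last exact: closed_closure.
  by move=> z _; exact: hc.
have chD : compact (h @` (L n `&` h @^-1` closure p.1)).
  by apply: continuous_compact cD; exact: continuous_subspaceT.
have DB : h @` (L n `&` h @^-1` closure p.1) `<=` p.2.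
  by move=> _ [g [_ /clAB Bg] <-].
have DU : L n.+1 `&` h @^-1` (h @` (L n `&` h @^-1` closure p.1)) `<=` U.
  move=> g [Lg [g' [Lg' Ag'] /hinj g'g]]; rewrite -g'g; apply: LBU; split => //.
  by apply: subset_closure; apply: clAB.
have [p' [lp' Dp' p'B]] := layer_around chD oB DB DU.
by exists p' => //; split => // g Dg; apply: Dp'; exists g.
Qed.
End Layers.

Lemma k_omega_injective_regular_map : k_omega_space X -> regular_map h.
Proof.
move=> [K [cK [covK topK]]]; split => // x U0 nU0.
pose U := U0°.
have oU : open U by exact: open_interior.
pose fix L n := if n is k.+1 then L k `|` K n else [set x] `|` K 0%N.
have cL n : compact (L n).
  by elim: n => [|n IH] /=; apply: compactU => //; exact: compact_set1.
have Lnd : nondecreasing_seq L.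
  by apply/nondecreasing_seqP => n; apply/subsetPset; left.
have KL n : K n `<=` L n by case: n => [|n] g Kg; right.
have hxU : L 0 `&` h @^-1` [set h x] `<=` U.
  move=> g [_ /hinj ->]; apply: nbhs_singleton; exact: nbhs_interior.
have [p0 [l0 Ahx _]] :=
  layer_around cL oU (@compact_set1 _ (h x)) openT (@subsetT _ _) hxU.
have [s [s0 /all_and2 [ls /all_and2 [sA sB]]]] :=
  nat_dependent_choice l0 (layer_next cL oU).
pose A n := (s n).1; pose B n := (s n).2.
have Bni : nonincreasing_seq B.
  by apply/nonincreasing_seqP => n; apply/subsetPset; exact: sB.
pose W := \bigcup_n (L n `&` h @^-1` A n).
have Wnd : nondecreasing_seq (fun n => L n `&` h @^-1` A n).
  apply/nondecreasing_seqP => n; apply/subsetPset => g [Lg Ag]; split; first by left.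
  by apply: sA; split => //; exact: subset_closure.
have oW : open W.
  apply: (k_omega_open_bigcup (fun V => (topK V).2) Lnd KL _ Wnd) => n.
  by apply: open_comp; [move=> z _; exact: hc | case: (ls n)].
pose F := \bigcap_n closure (B n).
exists F; split; [|split; [|split]].
- by apply: closed_bigI => n _; exact: closed_closure.
- apply: preimage_closed; first by move=> z _; exact: hc.
  by apply: closed_bigI => n _; exact: closed_closure.
- have Wx : W x.
    by exists 0%N => //; split; [left | rewrite /preimage /A s0; exact: Ahx].
  apply: filterS (open_nbhs_nbhs (conj oW Wx)).
  move=> g [n _ LAg] k _; apply: subset_closure.
  move/subsetPset: (Wnd n _ (leq_maxl n k)) => /(_ g LAg) [_ Ag].
  move/subsetPset: (Bni k _ (leq_maxr n k)); apply.
  by case: (ls (maxn n k)) => _ _ clAB _; apply/clAB/subset_closure.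
- move=> g Fg; apply: interior_subset.
  have [m _ Kg] : (\bigcup_n K n) g by rewrite covK.
  by case: (ls m) => _ _ _; apply; split; [exact: KL | exact: Fg].
Qed.
End KOmegaRegularMap.

Lemma regular_map_injective (X Y : topologicalType) (h : X -> Y) :
  hausdorff_space X -> regular_map h -> injective h.
Proof.
move=> Xhaus [_ hreg] x y hxy; apply: Xhaus => A B nA nB.
have [F [_ [_ [nF FA]]]] := hreg x A nA.
exists y; split; last exact: nbhs_singleton.
by apply: FA; rewrite /preimage /= -hxy; exact: nbhs_singleton nF.
Qed.

Theorem corollary1 (C : TopGroupClass) (G : ParaTopGroup) :
  k_omega_space (ptg_sort G) -> (separated_by C G <-> regular_by C G).
Proof.
move=> kw; split.
  move=> [H [CH [h [hom [hc hbij]]]]]; exists H; split => //; exists h.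
  split => //; split.
    exact: k_omega_injective_regular_map (@tg_hausdorff H) (@tg_regular H)
      hc (bij_inj hbij) kw.
  by case: hbij => g _ gK y; exists (g y).
move=> [H [CH [h [hom [hreg hsurj]]]]]; exists H; split => //; exists h.
split => //; split; first by case: hreg.
have hinj := regular_map_injective (@ptg_hausdorff G) hreg.
have [g hg] := choice hsurj.
by exists g => // x; apply: hinj; rewrite hg.
Qed.
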